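(* Consider the constrained online prediction problem and the \texttt{BanditQ} policy described in the context, with horizon $T$ and constant parameter $V_t=V=\Theta(\sqrt{T})$. For each $T$ let $\mathcal{I}=\mathcal{I}_T\subseteq[T]$ be an interval of consecutive rounds such that $T^{3/4}=o(|\mathcal{I}|)$ as $T\to\infty$. Then for every $i\in\mathcal{P}$, \[\liminf_{|\mathcal{I}|\to\infty}\ \frac{1}{|\mathcal{I}|}\sum_{t\in\mathcal{I}} r_i(t)\,x_i(t)\ \ge\ \lambda_i .\]
   Context: There are $N$ users. On each round $t=1,2,\dots$ an online policy chooses a probability vector $\bm{x}(t)=(x_1(t),\dots,x_N(t))$ in the standard simplex $\Delta_N=\{\bm{x}\in\mathbb{R}^N_{\ge 0}:\sum_i x_i=1\}$; afterwards an adversarially chosen reward vector $\bm{r}(t)=(r_1(t),\dots,r_N(t))\in[0,1]^N$ is revealed (full information), and the policy may use all past reward vectors to choose $\bm{x}(t+1)$. A subset $\mathcal{P}\subseteq[N]$ of protected users is given, with target rates $\lambda_i\in[0,1]$, $i\in\mathcal{P}$, satisfying $\sum_{i\in\mathcal{P}}\lambda_i\le 1$; set $\lambda_i=0$ for $i\notin\mathcal{P}$. The feasible set of stationary actions is $\Omega=\{\bm{x}^*\in\Delta_N : r_i(t)x^*_i\ge\lambda_i \text{ for all } i\in\mathcal{P} \text{ and all rounds } t\}$, which is assumed nonempty. The \texttt{BanditQ} policy: for each $i\in\mathcal{P}$ maintain $Q_i(0)=0$ and $Q_i(t)=\max\big(0,\,Q_i(t-1)+\lambda_i-r_i(t)x_i(t)\big)$;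 for $i\notin\mathcal{P}$ set $Q_i(t)=0$ for all $t$. Given a non-negative parameter sequence $(V_t)_{t\ge1}$, define surrogate rewards $r'_i(t)=(Q_i(t-1)+V_t)\,r_i(t)$ for all $i\in[N]$. Starting from an arbitrary $\bm{x}(1)\in\Delta_N$, the policy updates by adaptive online gradient ascent: $\bm{x}(t+1)=\Pi_{\Delta_N}\Big(\bm{x}(t)+\bm{r}'(t)\big/\sqrt{2\sum_{\tau=1}^{t}\|\bm{r}'(\tau)\|_2^2}\Big)$, where $\Pi_{\Delta_N}$ denotes Euclidean projection onto $\Delta_N$. *)

From HB Require Import structures.
From mathcomp Require Import all_boot all_order all_algebra.
From mathcomp Require Import all_classical all_reals all_analysis.
Set Implicit Arguments. Unset Strict Implicit. Unset Printing Implicit Defensive.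
Import Order.TTheory GRing.Theory Num.Theory.
Local Open Scope ring_scope.

Section BanditQ.
Variable R : realType.
Variable N : nat.

Definition in_simplex (x : 'I_N -> R) : Prop :=
  (forall i, 0 <= x i) /\ \sum_(i < N) x i = 1.

Definition sqdist (x y : 'I_N -> R) : R := \sum_(i < N) (x i - y i) ^+ 2.

Definition is_simplex_proj (y z : 'I_N -> R) : Prop :=
  in_simplex z /\ forall w, in_simplex w -> sqdist y z <= sqdist y w.

Variables (P : {set 'I_N}) (lam : 'I_N -> R).
(* rewards r t i = r_i(t), rounds t = 1, 2, ... ; x t i = x_i(t) *)
Variables (r : nat -> 'I_N -> R) (x : nat -> 'I_N -> R).

Fixpoint Q (i : 'I_N) (t : nat) : R :=
  match t with
  | 0 => 0
  | t'.+1 => if i \in P then Num.max 0 (Q i t' + lam i - r t i * x t i) else 0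
  end.

Definition surr (V : nat -> R) (t : nat) (i : 'I_N) : R :=
  (Q i t.-1 + V t) * r t i.

Definition banditQ_traj (V : nat -> R) : Prop :=
  in_simplex (x 1) /\
  forall t, (1 <= t)%N ->
    is_simplex_proj
      (fun i => x t i + surr V t i /
         Num.sqrt (2 * \sum_(1 <= tau < t.+1) \sum_(j < N) surr V tau j ^+ 2))
      (x t.+1).

End BanditQ.

(* The queue Q_i is a virtual queue: over a window of L rounds the service
   sum r_i x_i falls short of lam_i L by at most the queue length at the end
   of the window, so it suffices to show Q_i(t) = O(T^{3/4}) for t <= T.
   For the potential Phi = sum_i Q_i^2, feasibility of xs gives the drift
   bound Phi(t+1) <= Phi(t) + 2 + 2V + 2 <r'(t+1), xs - x(t+1)>, and the
   regret bound of adaptive online gradient ascent sums the last terms to at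
   most 3 a_T, where a_T^2 = 2 sum_t |r'(t)|^2.  As |r'(t+1)|^2 <= 2 Phi(t)
   + 2 N V^2, this closes into a_T = O(T^{5/4}) and Phi = O(T^{3/2}) when
   V = O(sqrt T). *)

From HB Require Import structures.
From mathcomp Require Import all_boot all_order all_algebra.
From mathcomp Require Import all_classical all_reals all_analysis.
From mathcomp Require Import ring lra.
Import Order.TTheory GRing.Theory Num.Theory.
Local Open Scope ring_scope.

Section Simplex.
Context {R : realType} {N : nat}.
Implicit Types (y z u w : 'I_N -> R).

Lemma sqdist_ge0 y z : 0 <= sqdist y z.
Proof. by apply: sumr_ge0 => i _; exact: sqr_ge0. Qed.

Lemma simplex_entry_le1 {u} : in_simplex u -> forall i, 0 <= u i <= 1.
Proof.
move=> [u_ge0 u_sum] i; rewrite u_ge0 -u_sum (bigD1 i) //= lerDl.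
by apply: sumr_ge0 => j _.
Qed.

Lemma sqdist_simplex_le2 {u w} : in_simplex u -> in_simplex w -> sqdist u w <= 2.
Proof.
move=> u_simplex w_simplex.
have -> : (2 : R) = \sum_(i < N) (u i + w i).
  by rewrite big_split /= u_simplex.2 w_simplex.2.
apply: ler_sum => i _.
have := simplex_entry_le1 u_simplex i; have := simplex_entry_le1 w_simplex i.
nra.
Qed.

Lemma in_simplex_segment {z w} e : in_simplex z -> in_simplex w -> 0 <= e -> e <= 1 ->
  in_simplex (fun i => z i + e * (w i - z i)).
Proof.
move=> [z_ge0 z_sum] [w_ge0 w_sum] e_ge0 e_le1; split.
  by move=> i; have := z_ge0 i; have := w_ge0 i; nra.
by rewrite big_split /= -mulr_sumr sumrB z_sum w_sum subrr mulr0 addr0.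
Qed.

(* If the inner product p were positive, moving from z towards w by the step
   e = p / (sqdist w z + p) would strictly decrease the distance to y. *)
Lemma simplex_proj_obtuse {y z w} : is_simplex_proj y z -> in_simplex w ->
  \sum_(i < N) (y i - z i) * (w i - z i) <= 0.
Proof.
move=> [z_simplex z_min] w_simplex.
set p := \sum_(i < N) _; set D := sqdist w z.
rewrite leNgt; apply/negP => p_gt0.
have D_ge0 : 0 <= D := sqdist_ge0 w z.
set e := p / (D + p).
have e_gt0 : 0 < e by rewrite divr_gt0 //; lra.
have e_le1 : e <= 1 by rewrite ler_pdivrMr ?mul1r; lra.
have := z_min _ (in_simplex_segment e z_simplex w_simplex (ltW e_gt0) e_le1).
have -> : sqdist y (fun i => z i + e * (w i - z i)) =
          sqdist y z - 2 * e * p + e ^+ 2 * D.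
  rewrite /sqdist /D /p /sqdist !mulr_sumr -sumrB -big_split /=.
  by apply: eq_bigr => i _; ring.
move=> le_dist.
have two_p_le : 2 * p <= e * D.
  by rewrite -subr_ge0 -(pmulr_rge0 _ e_gt0); lra.
have : e * D * (D + p) = p * D by rewrite /e; field; lra.
nra.
Qed.

Lemma sqdist_simplex_proj_le {y z w} : is_simplex_proj y z -> in_simplex w ->
  sqdist z w <= sqdist y w.
Proof.
move=> z_proj w_simplex; have := simplex_proj_obtuse z_proj w_simplex.
have : 0 <= sqdist y z := sqdist_ge0 y z.
have -> : sqdist y w = sqdist y z + sqdist z w
                       - 2 * \sum_(i < N) (y i - z i) * (w i - z i).
  rewrite /sqdist mulr_sumr -big_split -sumrB /=.
  by apply: eq_bigr => i _; ring.
lra.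
Qed.

End Simplex.

Lemma powR_ratn_exprn {R : realType} {x : R} m n : 0 <= x -> (0 < n)%N ->
  (x `^ (m%:R / n%:R)) ^+ n = x ^+ m.
Proof.
move=> x_ge0 n_gt0; rewrite -powR_mulrn ?powR_ge0 // -powRrM.
by rewrite mulfVK ?pnatr_eq0 -?lt0n // powR_mulrn.
Qed.

Lemma le_mulr_of_expr4_le {R : realFieldType} {q p K : R} :
  0 <= q -> 0 <= p -> 0 <= K -> q ^+ 4 <= K * p ^+ 4 -> q <= (K + 1) * p.
Proof.
move=> q_ge0 p_ge0 K_ge0 q4_le.
rewrite -(ler_pXn2r (_ : 0 < 4)%N) ?nnegrE ?mulr_ge0 ?addr_ge0 //.
apply: le_trans q4_le _; rewrite exprMn; apply: ler_wpM2r; first exact: exprn_ge0.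
have K1_ge1 : 1 <= K + 1 by lra.
by apply: (@le_trans _ _ (K + 1)); [lra | exact: ler_eXnr].
Qed.

Section AdaptiveOGD.
Context {R : realType} {N : nat}.
Variables (g x : nat -> 'I_N -> R) (xs : 'I_N -> R).

Definition ogd_scale t : R :=
  Num.sqrt (2 * \sum_(1 <= tau < t.+1) \sum_(j < N) g tau j ^+ 2).

Hypothesis x1_simplex : in_simplex (x 1).
Hypothesis x_proj : forall t, (1 <= t)%N ->
  is_simplex_proj (fun i => x t i + g t i / ogd_scale t) (x t.+1).
Hypothesis xs_simplex : in_simplex xs.

Local Notation a := ogd_scale.
Local Notation sqnorm t := (\sum_(j < N) g t j ^+ 2).
Local Notation gain t := (\sum_(i < N) g t i * (xs i - x t i)).
Local Notation d t := (sqdist (x t) xs).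

Lemma ogd_simplex {t} : (1 <= t)%N -> in_simplex (x t).
Proof. by case: t => // -[|t] _ //; exact: (x_proj t.+1 (ltn0Sn t)).1. Qed.

Lemma sqnorm_ge0 t : 0 <= sqnorm t.
Proof. by apply: sumr_ge0 => j _; exact: sqr_ge0. Qed.

Lemma ogd_scale_ge0 t : 0 <= a t.
Proof. exact: sqrtr_ge0. Qed.

Lemma ogd_scale0 : a 0 = 0.
Proof. by rewrite /ogd_scale big_geq // mulr0 sqrtr0. Qed.

Lemma ogd_scale_sq t : a t ^+ 2 = 2 * \sum_(1 <= tau < t.+1) sqnorm tau.
Proof.
by rewrite sqr_sqrtr // mulr_ge0 // sumr_ge0 // => tau _; exact: sqnorm_ge0.
Qed.

Lemma ogd_scaleS_sq t : a t.+1 ^+ 2 = a t ^+ 2 + 2 * sqnorm t.+1.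
Proof. by rewrite !ogd_scale_sq big_nat_recr //= mulrDr. Qed.

Lemma ogd_scale_le : {homo a : t u / (t <= u)%N >-> t <= u}.
Proof.
apply: homo_leq => [//|t u v|t]; first exact: le_trans.
rewrite -(ler_pXn2r (_ : 0 < 2)%N) ?nnegrE ?ogd_scale_ge0 // ogd_scaleS_sq.
by rewrite lerDl mulr_ge0 ?sqnorm_ge0.
Qed.

(* When [a t = 0] the gradient [g t] vanishes, and so does the right-hand
   side since [x / 0 = 0]. *)
Lemma ogd_gain_le {t} : (1 <= t)%N ->
  gain t <= a t * (d t - d t.+1) / 2 + sqnorm t / (2 * a t).
Proof.
move=> t_ge1.
have [a_eq0|a_neq0] := eqVneq (a t) 0.
  have sqnorm_eq0 : sqnorm t = 0.
    have := ogd_scaleS_sq t.-1; rewrite prednK // a_eq0 expr0n /=.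
    have := sqnorm_ge0 t; have := sqr_ge0 (a t.-1); lra.
  have g_eq0 j : g t j = 0.
    apply/eqP; rewrite -sqrf_eq0; apply/eqP.
    by apply: (psumr_eq0P (fun j _ => sqr_ge0 (g t j)) sqnorm_eq0).
  by rewrite big1 ?a_eq0 ?sqnorm_eq0 ?mul0r ?add0r // => j _; rewrite g_eq0 mul0r.
have a_gt0 : 0 < a t by rewrite lt_def a_neq0 ogd_scale_ge0.
have := sqdist_simplex_proj_le (x_proj t t_ge1) xs_simplex.
have -> : sqdist (fun i => x t i + g t i / a t) xs =
          d t - 2 / a t * gain t + sqnorm t / a t ^+ 2.
  rewrite /sqdist mulr_sumr mulr_suml -sumrB -big_split /=.
  by apply: eq_bigr => i _; field.
rewrite -(ler_pM2l a_gt0).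
have -> : a t * (d t - 2 / a t * gain t + sqnorm t / a t ^+ 2) =
          a t * d t - 2 * gain t + sqnorm t / a t by field.
have -> : sqnorm t / (2 * a t) = sqnorm t / a t / 2 by field.
lra.
Qed.

Lemma sqnorm_div_scale_le t : sqnorm t.+1 / (2 * a t.+1) <= (a t.+1 - a t) / 2.
Proof.
have a_le : a t <= a t.+1 by apply: ogd_scale_le.
have [a_eq0|a_neq0] := eqVneq (a t.+1) 0.
  by rewrite a_eq0 mulr0 invr0 mulr0; lra.
have a_gt0 : 0 < a t.+1 by rewrite lt_def a_neq0 ogd_scale_ge0.
rewrite ler_pdivrMr ?mulr_gt0 //.
have := ogd_scaleS_sq t; have := ogd_scale_ge0 t; nra.
Qed.

(* The distance term is what lets the induction telescope. *)
Lemma ogd_regret_le T : \sum_(1 <= t < T.+1) gain t <= 3 / 2 * a T.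
Proof.
suff : \sum_(1 <= t < T.+1) gain t + a T * d T.+1 / 2 <= 3 / 2 * a T.
  by have := mulr_ge0 (ogd_scale_ge0 T) (sqdist_ge0 (x T.+1) xs); lra.
elim: T => [|T IH]; first by rewrite big_geq // ogd_scale0; lra.
rewrite big_nat_recr //=.
have := ogd_gain_le (ltn0Sn T); have := sqnorm_div_scale_le T.
have d_le2 := sqdist_simplex_le2 (ogd_simplex (ltn0Sn T)) xs_simplex.
have da_ge0 : 0 <= a T.+1 - a T by rewrite subr_ge0; apply: ogd_scale_le.
have := ler_wpM2l da_ge0 d_le2.
have := mulr_ge0 (ogd_scale_ge0 T.+1) (sqdist_ge0 (x T.+2) xs).
nra.
Qed.

End AdaptiveOGD.

Section Queue.
Context {R : realType} {N : nat}.
Context {P : {set 'I_N}} {lam : 'I_N -> R} {r x : nat -> 'I_N -> R}.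

Local Notation Qi := (Q P lam r x).

Lemma Q_ge0 i t : 0 <= Qi i t.
Proof. by case: t => //= t; case: ifP => _ //; rewrite le_max lexx. Qed.

Lemma Q_notin i t : i \notin P -> Qi i t = 0.
Proof. by move=> iNP; case: t => //= t; rewrite (negbTE iNP). Qed.

Lemma Q_succ_ge i t : i \in P ->
  Qi i t + lam i - r t.+1 i * x t.+1 i <= Qi i t.+1.
Proof. by move=> iP; rewrite /= iP le_max lexx orbT. Qed.

Lemma Q_succ_sq_le i t : i \in P ->
  Qi i t.+1 ^+ 2 <= (Qi i t + lam i - r t.+1 i * x t.+1 i) ^+ 2.
Proof.
move=> iP; rewrite /= iP maxEle.
by case: ifP => // _; rewrite expr0n /= sqr_ge0.
Qed.

Lemma sum_service_ge i s L : i \in P ->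
  lam i * L%:R + Qi i s - Qi i (s + L) <= \sum_(s.+1 <= t < s.+1 + L) r t i * x t i.
Proof.
move=> iP; elim: L => [|L IH]; first by rewrite addn0 big_geq ?addn0 // mulr0; lra.
have := Q_succ_ge i (s + L) iP.
rewrite !addnS !addSn big_nat_recr ?leq_addr //= -natr1.
rewrite addSn in IH; lra.
Qed.

Lemma mean_service_ge {i s L eps} : i \in P -> (0 < L)%N ->
  Qi i (s + L) <= eps * L%:R ->
  lam i - eps <= L%:R^-1 * \sum_(s.+1 <= t < s.+1 + L) r t i * x t i.
Proof.
move=> iP L_gt0 Q_le; have L_gt0' : 0 < L%:R :> R by rewrite ltr0n.
rewrite -(ler_pM2l L_gt0') mulrA mulfV ?mul1r ?gt_eqF //.
have := sum_service_ge i s L iP; have := Q_ge0 i s; lra.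
Qed.

End Queue.

Section Drift.
Context {R : realType} {N : nat} {P : {set 'I_N}} {lam : 'I_N -> R}.
Context {r x : nat -> 'I_N -> R} {v : R} {xs : 'I_N -> R}.
Hypothesis r01 : forall t i, 0 <= r t i <= 1.
Hypothesis lam01 : forall i, i \in P -> 0 <= lam i <= 1.
Hypothesis lam_sum : \sum_(i in P) lam i <= 1.
Hypothesis xs_simplex : in_simplex xs.
Hypothesis xs_feasible : forall t i, (1 <= t)%N -> i \in P -> lam i <= r t i * xs i.
Hypothesis traj : banditQ_traj P lam r x (fun _ => v).
Hypothesis v_ge0 : 0 <= v.

Local Notation Qi := (Q P lam r x).
Local Notation g := (surr P lam r x (fun _ => v)).
Local Notation a := (ogd_scale g).
Local Notation Phi t := (\sum_(i < N) Qi i t ^+ 2).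
Local Notation gain t := (\sum_(i < N) g t i * (xs i - x t i)).

Let x_simplex t : in_simplex (x t.+1).
Proof. exact: (ogd_simplex _ _ traj.1 traj.2 (ltn0Sn t)). Qed.

(* Feasibility [lam i <= r xs i] turns [Q (lam - r x)] into [Q r (xs - x)]. *)
Lemma Q_sq_drift i t :
  Qi i t.+1 ^+ 2 <= Qi i t ^+ 2 + 2 * (g t.+1 i * (xs i - x t.+1 i) + v * x t.+1 i)
                    + (if i \in P then lam i + x t.+1 i else 0).
Proof.
have /andP[x_ge0 x_le1] := simplex_entry_le1 (x_simplex t) i.
have xs_ge0 := xs_simplex.1 i.
have /andP[r_ge0 r_le1] := r01 t.+1 i.
have vr_xs : 0 <= v * (r t.+1 i * xs i) by rewrite !mulr_ge0.
have vx_r : 0 <= v * (x t.+1 i * (1 - r t.+1 i)) by rewrite !mulr_ge0 ?subr_ge0.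
case: ifP => iP; last first.
  have Q_eq0 u : Qi i u = 0 := Q_notin i u (negbT iP).
  by rewrite /surr !Q_eq0 expr0n /=; lra.
apply: le_trans (Q_succ_sq_le i t iP) _; rewrite /surr /=.
have q_ge0 : 0 <= Qi i t := Q_ge0 i t.
have /andP[lam_ge0 lam_le1] := lam01 i iP.
have : 0 <= Qi i t * (r t.+1 i * xs i - lam i).
  by rewrite mulr_ge0 // subr_ge0 xs_feasible.
have : (lam i - r t.+1 i * x t.+1 i) ^+ 2 <= lam i + x t.+1 i.
  have : 0 <= r t.+1 i * x t.+1 i <= 1 by rewrite mulr_ge0 //= mulr_ile1.
  nra.
nra.
Qed.

Lemma potential_drift t : Phi t.+1 <= Phi t + 2 + 2 * v + 2 * gain t.+1.
Proof.
apply: le_trans (ler_sum _ (fun i _ => Q_sq_drift i t)) _.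
have extra_le2 : \sum_(i < N) (if i \in P then lam i + x t.+1 i else 0) <= 2.
  rewrite -big_mkcond big_split /=; apply: lerD => //.
  rewrite -(x_simplex t).2 [leRHS](bigID (mem P)) /= lerDl.
  by apply: sumr_ge0 => i _; exact: (x_simplex t).1.
rewrite !big_split /= -!mulr_sumr big_split /= -mulr_sumr (x_simplex t).2.
lra.
Qed.

Lemma potential_le T : Phi T <= (2 + 2 * v) * T%:R + 3 * a T.
Proof.
suff Phi_sum : Phi T <= (2 + 2 * v) * T%:R + 2 * \sum_(1 <= t < T.+1) gain t.
  by have := ogd_regret_le _ _ _ traj.1 traj.2 xs_simplex T; lra.
elim: T => [|T IH].
  by rewrite big_geq // big1 ?mulr0 ?addr0 // => i _; exact: expr0n.
rewrite big_nat_recr //= -natr1; have := potential_drift T; lra.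
Qed.

Lemma sqnorm_surr_le t : \sum_(j < N) g t.+1 j ^+ 2 <= 2 * Phi t + 2 * (N%:R * v ^+ 2).
Proof.
have -> : 2 * Phi t + 2 * (N%:R * v ^+ 2) = \sum_(i < N) (2 * Qi i t ^+ 2 + 2 * v ^+ 2).
  by rewrite big_split /= -mulr_sumr sumr_const card_ord -mulr_natl; ring.
apply: ler_sum => i _; rewrite /surr /= exprMn.
have /andP[r_ge0 r_le1] := r01 t.+1 i.
apply: le_trans (ler_wpM2l (sqr_ge0 _) (exprn_ile1 2 r_ge0 r_le1)) _.
by rewrite mulr1; have := sqr_ge0 (Qi i t - v); nra.
Qed.

Lemma potential_le_horizon {u T} : (u <= T)%N ->
  Phi u <= (2 + 2 * v) * T%:R + 3 * a T.
Proof.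
move=> u_le; apply: le_trans (potential_le u) _.
have : a u <= a T by apply: ogd_scale_le.
have : (2 + 2 * v) * u%:R <= (2 + 2 * v) * T%:R.
  by apply: ler_wpM2l; rewrite ?ler_nat // addr_ge0 // mulr_ge0.
lra.
Qed.

(* Summing [sqnorm_surr_le] gives [a T ^+ 2 <= 4 T (B + N v^2) + 12 T a T]
   with [B = (2 + 2 v) T], a quadratic inequality in [a T]. *)
Lemma ogd_scale_sq_le T :
  a T ^+ 2 <= 8 * T%:R * ((2 + 2 * v) * T%:R + N%:R * v ^+ 2) + 144 * T%:R ^+ 2.
Proof.
set B := (2 + 2 * v) * T%:R.
have cum_le u : (u <= T)%N -> \sum_(1 <= tau < u.+1) \sum_(j < N) g tau j ^+ 2
                   <= u%:R * (2 * (B + 3 * a T) + 2 * (N%:R * v ^+ 2)).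
  elim: u => [|u IH] u_le; first by rewrite big_geq // mul0r.
  rewrite big_nat_recr //= -natr1 mulrDl mul1r.
  have := IH (ltnW u_le); have := sqnorm_surr_le u.
  have := potential_le_horizon (ltnW u_le); rewrite -/B.
  lra.
have := cum_le T (leqnn T); have := ogd_scale_sq g T.
have := sqr_ge0 (a T - 12 * T%:R).
nra.
Qed.

Lemma Q_pow4_le i {t T} : (t <= T)%N ->
  Qi i t ^+ 4 <= 2 * ((2 + 2 * v) * T%:R) ^+ 2
    + 18 * (8 * T%:R * ((2 + 2 * v) * T%:R + N%:R * v ^+ 2) + 144 * T%:R ^+ 2).
Proof.
move=> t_le; set B := (2 + 2 * v) * T%:R.
have Q_sq_le : Qi i t ^+ 2 <= B + 3 * a T.
  apply: le_trans _ (potential_le_horizon t_le).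
  by rewrite (bigD1 i) //= lerDl sumr_ge0 // => j _; exact: sqr_ge0.
have -> : Qi i t ^+ 4 = (Qi i t ^+ 2) ^+ 2 by rewrite -exprM.
have B_ge0 : 0 <= B + 3 * a T := le_trans (sqr_ge0 _) Q_sq_le.
apply: le_trans (_ : _ <= (B + 3 * a T) ^+ 2) _.
  by rewrite ler_pXn2r ?nnegrE ?sqr_ge0.
have := ogd_scale_sq_le T; rewrite -/B; have := sqr_ge0 (B - 3 * a T).
nra.
Qed.

Lemma Q_pow4_le_cube c i {t T} : (1 <= T)%N -> v ^+ 2 <= c ^+ 2 * T%:R -> (t <= T)%N ->
  Qi i t ^+ 4 <= (3040 + (160 + 144 * N%:R) * c ^+ 2) * T%:R ^+ 3.
Proof.
move=> T_ge1 v_sq_le t_le; apply: le_trans (Q_pow4_le i t_le) _.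
have n_ge1 : 1 <= T%:R :> R by rewrite ler1n.
set n := T%:R in n_ge1 v_sq_le *.
have n2_le : n ^+ 2 <= n ^+ 3 by rewrite [n ^+ 3]exprS ler_peMl ?sqr_ge0.
have v2n2_le : v ^+ 2 * n ^+ 2 <= c ^+ 2 * n ^+ 3.
  have -> : c ^+ 2 * n ^+ 3 = c ^+ 2 * n * n ^+ 2 by ring.
  exact: ler_wpM2r (sqr_ge0 n) _ _ v_sq_le.
have v2n_le : v ^+ 2 * n <= c ^+ 2 * n ^+ 2.
  by rewrite expr2 mulrA; apply: ler_wpM2r => //; lra.
have c2n2_le : c ^+ 2 * n ^+ 2 <= c ^+ 2 * n ^+ 3.
  by apply: ler_wpM2l; rewrite ?sqr_ge0.
have Nv2n_le : N%:R * (v ^+ 2 * n) <= N%:R * (c ^+ 2 * n ^+ 3).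
  by apply: ler_wpM2l => //; apply: le_trans v2n_le c2n2_le.
have vn2_le : 2 * v * n ^+ 2 <= n ^+ 2 + v ^+ 2 * n ^+ 2.
  by have := mulr_ge0 (sqr_ge0 (v - 1)) (sqr_ge0 n); nra.
nra.
Qed.

Lemma Q_le_powR c i {t T} : (1 <= T)%N -> v ^+ 2 <= c ^+ 2 * T%:R -> (t <= T)%N ->
  Qi i t <= (3040 + (160 + 144 * N%:R) * c ^+ 2 + 1) * T%:R `^ (3 / 4).
Proof.
move=> T_ge1 v_sq_le t_le.
have K_ge0 : 0 <= 3040 + (160 + 144 * N%:R) * c ^+ 2 :> R.
  by have := sqr_ge0 c; have := ler0n R N; nra.
apply: le_mulr_of_expr4_le (Q_ge0 i t) (powR_ge0 _ _) K_ge0 _.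
by rewrite powR_ratn_exprn //; apply: Q_pow4_le_cube.
Qed.

End Drift.

Theorem proposition2 (R : realType) (N : nat) (P : {set 'I_N}) (lam : 'I_N -> R)
  (r : nat -> 'I_N -> R)
  (* V T = the constant parameter V used for horizon T *)
  (V : nat -> R)
  (* x T = the BanditQ trajectory run with parameter V_t = V T for all t *)
  (x : nat -> nat -> 'I_N -> R)
  (* I_T = {s T, s T + 1, ..., s T + L T - 1} *)
  (s L : nat -> nat) :
  (forall t i, 0 <= r t i <= 1) ->
  (forall i, i \in P -> 0 <= lam i <= 1) ->
  (forall i, i \notin P -> lam i = 0) ->
  \sum_(i in P) lam i <= 1 ->
  (exists xs : 'I_N -> R, in_simplex xs /\
     forall t i, (1 <= t)%N -> i \in P -> lam i <= r t i * xs i) ->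
  (* V = Theta(sqrt T) *)
  (exists c1 c2 : R, exists T0 : nat, 0 < c1 /\ 0 < c2 /\
     forall T : nat, (T0 <= T)%N ->
       c1 * Num.sqrt T%:R <= V T <= c2 * Num.sqrt T%:R) ->
  (forall T : nat, banditQ_traj P lam r (x T) (fun _ => V T)) ->
  (* I_T is an interval of consecutive rounds inside [T] = {1, ..., T} *)
  (forall T : nat, (1 <= s T)%N /\ (s T + L T <= T.+1)%N) ->
  (* T^{3/4} = o(|I_T|) *)
  (forall eps : R, 0 < eps -> exists T0 : nat, forall T : nat, (T0 <= T)%N ->
     T%:R `^ (3 / 4) <= eps * (L T)%:R) ->
  (* liminf of the average over I_T of r_i(t) x_i(t) is >= lam i *)
  forall i, i \in P ->
  forall eps : R, 0 < eps -> exists T0 : nat, forall T : nat, (T0 <= T)%N ->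
    lam i - eps <= (L T)%:R^-1 * \sum_(s T <= t < s T + L T) r t i * x T t i.
Proof.
move=> r01 lam01 _ lam_sum [xs [xs_simplex xs_feasible]]
  [c1 [c [T0 [c1_gt0 [c_gt0 V_sqrt]]]]] traj interval growth i iP eps eps_gt0.
set C : R := 3040 + (160 + 144 * N%:R) * c ^+ 2 + 1.
have C_gt0 : 0 < C by rewrite /C; have := sqr_ge0 c; have := ler0n R N; nra.
have [T1 T1_growth] := growth _ (divr_gt0 eps_gt0 C_gt0).
exists (maxn (maxn T0 T1) 1) => T; rewrite !geq_max => /andP[/andP[T0_le T1_le] T_ge1].
have /andP[V_lo V_hi] := V_sqrt T T0_le.
have V_ge0 : 0 <= V T := le_trans (mulr_ge0 (ltW c1_gt0) (sqrtr_ge0 _)) V_lo.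
have V_sq_le : V T ^+ 2 <= c ^+ 2 * T%:R.
  rewrite -(sqr_sqrtr (ler0n R T)) -exprMn ler_pXn2r //.
  by rewrite nnegrE mulr_ge0 ?sqrtr_ge0 ?(ltW c_gt0).
have [s_ge1 sL_le] := interval T.
have p_le := T1_growth T T1_le; set p := T%:R `^ (3 / 4) in p_le.
have L_gt0 : (0 < L T)%N.
  have p_gt0 : 0 < p by apply: powR_gt0; rewrite ltr0n.
  by have := lt_le_trans p_gt0 p_le; rewrite pmulr_rgt0 ?ltr0n ?divr_gt0.
rewrite -(prednK s_ge1); apply: (mean_service_ge iP L_gt0).
have t_le : ((s T).-1 + L T <= T)%N by rewrite -ltnS -addSn prednK.
apply: le_trans (Q_le_powR r01 lam01 lam_sum xs_simplex xs_feasible (traj T) V_ge0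
                   c i T_ge1 V_sq_le t_le) _.
have -> : eps * (L T)%:R = C * (eps / C * (L T)%:R) by field; lra.
by rewrite ler_pM2l.
Qed.
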